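(* Let $T$ be a finite tree in which every vertex has degree one (a leaf) or degree three (an internal node), with vertex set $V(T)$, leaf set $L(T)$ and edge set $E(T)$. There exist nonnegative real numbers $\lambda_{vx}$ ($v\in V(T)$, $x\in L(T)$), depending only on $T$, with $\lambda_{xx}=1$ for all $x\in L(T)$, such that the following holds for every inner product $\langle\cdot,\cdot\rangle$ on $\mathrm{span}(\mathcal{H})$ and every map $\chi:L(T)\to\mathcal{K}_n$: among all extensions $\widehat{\chi}$ of $\chi$, there is a unique one of minimum length $\ell(\widehat{\chi})$, and it satisfies $\widehat{\chi}(v)=\sum_{x\in L(T)}\lambda_{vx}\chi(x)$ (Minkowski combination) for every $v\in V(T)$.
   Context: A convex body is a closed, bounded, non-empty convex subset of $\mathbb{R}^n$; $\mathcal{K}_n$ is the set of convex bodies in $\mathbb{R}^n$ with Minkowski addition and nonnegative scaling. The support function of $A$ is $h_A(x)=\sup\{a\cdot x: a\in A\}$; $\mathcal{H}=\{h_A: A\in\mathcal{K}_n\}$ and $\mathrm{span}(\mathcal{H})$ is its linear span among real functions on $\mathbb{R}^n$. Given an inner product on $\mathrm{span}(\mathcal{H})$, $d(A,B)=\langle h_A-h_B,h_A-h_B\rangle^{1/2}$. An extension of $\chi:L(T)\to\mathcal{K}_n$ is a map $\widehat{\chi}:V(T)\to\mathcal{K}_n$ with $\widehat{\chi}(x)=\chi(x)$ for all $x\in L(T)$; its length is $\ell(\widehat{\chi})=\sum_{\{x,y\}\in E(T)}d(\widehat{\chi}(x),\widehat{\chi}(y))^2$. *)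

From HB Require Import structures.
From mathcomp Require Import all_boot all_order all_algebra.
From mathcomp Require Import all_classical all_reals all_analysis.
Set Implicit Arguments. Unset Strict Implicit. Unset Printing Implicit Defensive.
Import Order.TTheory GRing.Theory Num.Theory.
Import numFieldNormedType.Exports.
Local Open Scope classical_set_scope.
Local Open Scope ring_scope.

Definition simple_graph (V : finType) (e : rel V) : Prop :=
  symmetric e /\ irreflexive e.

Definition degree (V : finType) (e : rel V) (v : V) : nat := #|[pred w | e v w]|.

Definition is_tree (V : finType) (e : rel V) : Prop :=
  simple_graph e /\
  (forall x y : V, connect e x y) /\
  (forall c : seq V, uniq c -> (3 <= size c)%N -> ~~ cycle e c).

Definition degrees_1_or_3 (V : finType) (e : rel V) : Prop :=
  forall v : V, degree e v = 1%N \/ degree e v = 3%N.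

Definition is_leaf (V : finType) (e : rel V) (v : V) : bool := degree e v == 1%N.

Definition convex_body (R : realType) (n : nat) (A : set 'rV[R]_n) : Prop :=
  closed A /\ bounded_set A /\ A !=set0 /\
  convex_set (A : set (convex_lmodType 'rV[R]_n)).

Definition dotp (R : realType) (n : nat) (a x : 'rV[R]_n) : R :=
  \sum_(i < n) a 0 i * x 0 i.

Definition support_fun (R : realType) (n : nat) (A : set 'rV[R]_n)
  : 'rV[R]_n -> R :=
  fun x => sup [set dotp a x | a in A].

Definition in_spanH (R : realType) (n : nat) (f : 'rV[R]_n -> R) : Prop :=
  exists (k : nat) (c : 'I_k -> R) (A : 'I_k -> set 'rV[R]_n),
    (forall i, convex_body (A i)) /\
    f = (fun x => \sum_(i < k) c i * support_fun (A i) x).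

(* an inner product on span(H): a symmetric bilinear positive definite form;
   it is given as a function on all real functions, only its restriction
   to span(H) is constrained *)
Definition inner_product_on_spanH (R : realType) (n : nat)
  (ip : ('rV[R]_n -> R) -> ('rV[R]_n -> R) -> R) : Prop :=
  (forall f g, in_spanH f -> in_spanH g -> ip f g = ip g f) /\
  (forall (a : R) f g k, in_spanH f -> in_spanH g -> in_spanH k ->
     ip (fun x => a * f x + g x) k = a * ip f k + ip g k) /\
  (forall f, in_spanH f -> f <> (fun _ => 0) -> 0 < ip f f).

Definition dist_ip (R : realType) (n : nat)
  (ip : ('rV[R]_n -> R) -> ('rV[R]_n -> R) -> R) (A B : set 'rV[R]_n) : R :=
  Num.sqrt (ip (fun x => support_fun A x - support_fun B x)
               (fun x => support_fun A x - support_fun B x)).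

Definition mink_add (R : realType) (n : nat) (A B : set 'rV[R]_n) : set 'rV[R]_n :=
  [set a + b | a in A & b in B].
Definition mink_scale (R : realType) (n : nat) (t : R) (A : set 'rV[R]_n)
  : set 'rV[R]_n := [set t *: a | a in A].

Definition is_extension (V : finType) (e : rel V) (R : realType) (n : nat)
  (chi chihat : V -> set 'rV[R]_n) : Prop :=
  (forall v, convex_body (chihat v)) /\
  (forall x, is_leaf e x -> chihat x = chi x).

(* length: sum over the edges {x,y} of E(T) of d(chihat x, chihat y)^2;
   each unordered edge appears twice among the ordered adjacent pairs *)
Definition ext_length (V : finType) (e : rel V) (R : realType) (n : nat)
  (ip : ('rV[R]_n -> R) -> ('rV[R]_n -> R) -> R) (chihat : V -> set 'rV[R]_n) : R :=
  2^-1 * \sum_(x : V) \sum_(y : V | e x y) dist_ip ip (chihat x) (chihat y) ^+ 2.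

From HB Require Import structures.
From mathcomp Require Import all_boot all_order all_algebra.
From mathcomp Require Import all_classical all_reals all_analysis.
From mathcomp Require Import lra.
Import Order.TTheory GRing.Theory Num.Theory.
Import numFieldNormedType.Exports.
Local Open Scope classical_set_scope.
Local Open Scope ring_scope.
Set Implicit Arguments. Unset Strict Implicit. Unset Printing Implicit Defensive.

(* The support functions of an extension form a map from the vertices into
   span(H), and its length is half the Dirichlet energy of that map.  If h is
   harmonic at the internal nodes and g agrees with h at the leaves, summation
   by parts gives energy g = energy h + energy (g - h), and energy (g - h) = 0
   forces g = h because the tree is connected: the harmonic map is the unique
   minimizer.  It is v |-> \sum_x lambda_vx h_chi(x), where lambda_.x is the
   discrete harmonic measure of the leaf x (the solution of the Dirichlet
   problem with the indicator of x as boundary data); it exists because the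
   Dirichlet operator is injective on a connected graph with a nonempty
   boundary, and it is nonnegative by the minimum principle.  As lambda >= 0,
   this is the support function of the Minkowski combination
   \sum_x lambda_vx chi(x), and a convex body is determined by its support
   function (separate a point from its nearest point in the body). *)


Section Graph.
Variables (V : finType) (e : rel V).
Hypothesis e_sym : symmetric e.

Lemma sum_edges_swap (M : nmodType) (F : V -> V -> M) :
  \sum_x \sum_(y | e x y) F x y = \sum_x \sum_(y | e x y) F y x.
Proof.
under eq_bigr do rewrite big_mkcond /=.
rewrite exchange_big /=; apply: eq_bigr => x _; rewrite [RHS]big_mkcond /=.
by apply: eq_bigr => y _; rewrite e_sym.
Qed.

Lemma sum_edges_by_parts (M : zmodType) (P : V -> V -> V -> M) :
  (forall x y w, P y x w = - P x y w) ->
  \sum_x \sum_(y | e x y) (P x y x - P x y y) =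
  (\sum_x \sum_(y | e x y) P x y x) *+ 2.
Proof.
move=> Panti; under eq_bigr do rewrite sumrB.
rewrite sumrB (sum_edges_swap (fun x y => P x y y)) /=.
under [X in _ - X]eq_bigr do under eq_bigr do rewrite Panti.
under [X in _ - X]eq_bigr do rewrite sumrN.
by rewrite sumrN opprK.
Qed.

Hypothesis connected : forall x y : V, connect e x y.

Lemma connected_invariant (a : {pred V}) :
  (forall x y, e x y -> x \in a -> y \in a) -> forall x y, x \in a -> y \in a.
Proof.
move=> closed_a x y.
have csym := sym_connect_sym e_sym.
by rewrite (closed_connect (intro_closed csym closed_a) (connected x y)).
Qed.

Lemma connected_edge_const (T : eqType) (f : V -> T) :
  (forall x y, e x y -> f x = f y) -> forall x y, f x = f y.
Proof.
move=> fe x y; apply/esym/eqP.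
apply: (connected_invariant (a := [pred z | f z == f x])) (eqxx _).
by move=> u v /fe; rewrite !inE => ->.
Qed.
End Graph.

Section Tree.
Variables (V : finType) (e : rel V).
Hypothesis tree : is_tree e.

Lemma tree_sym : symmetric e.
Proof. by case: tree => [[]]. Qed.

Lemma tree_connected x y : connect e x y.
Proof. by case: tree => _ []. Qed.

Lemma uniq_path_extend x s y :
  path e x s -> uniq (x :: s) -> e x y -> y != head x s -> uniq (y :: x :: s).
Proof.
have [[e_sym e_irr] [_ acyclic]] := tree.
move=> pxs uxs exy y_head; rewrite cons_uniq uxs andbT inE negb_or.
have -> /= : y != x by apply: contraTneq exy => ->; rewrite e_irr.
apply/negP => /splitPr sy; case: sy pxs uxs y_head => p1 p2.
case: p1 => [|z p1] pxs uxs; first by rewrite eqxx.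
move=> _; apply: (negP (acyclic (x :: rcons (z :: p1) y) _ _)).
- by move: uxs; rewrite -cat_rcons -cat_cons cat_uniq => /andP[].
- by rewrite /= size_rcons.
rewrite /cycle rcons_path last_rcons e_sym exy andbT.
by move: pxs; rewrite -cat_rcons cat_path => /andP[].
Qed.

Lemma exists_low_degree (v : V) : exists x, (degree e x <= 1)%N.
Proof.
apply: contrapT => /forallNP all_deg2.
have other_neighbour x z : exists y, e x y && (y != z).
  apply: contrapT => /forallNP no_other; apply: (all_deg2 x).
  rewrite -(card1 z); apply: subset_leq_card; apply/fintype.subsetP => w exw.
  rewrite !inE in exw *; apply: contraT => wz.
  by case: (no_other w); rewrite exw wz.
have long_path k : exists x s, [/\ size s = k, path e x s & uniq (x :: s)].
  elim: k => [|k [x [s [<- pxs uxs]]]]; first by exists v, [::].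
  have [y /andP[exy y_head]] := other_neighbour x (head x s).
  exists y, (x :: s); split => //=.
  - by rewrite tree_sym exy.
  - exact: uniq_path_extend.
have [x [s [size_s _ uxs]]] := long_path #|V|.
by have := max_card (mem (x :: s)); rewrite (card_uniqP uxs) /= size_s ltnn.
Qed.

Lemma exists_leaf : degrees_1_or_3 e -> V -> exists x, is_leaf e x.
Proof.
move=> deg v; have [x deg_x] := exists_low_degree v; exists x.
by rewrite /is_leaf; case: (deg x) deg_x => ->.
Qed.

End Tree.

Section DirichletProblem.
Variables (R : realFieldType) (V : finType) (e : rel V) (bd : pred V).
Hypothesis e_sym : symmetric e.
Hypothesis connected : forall x y : V, connect e x y.
Hypothesis boundary_nonempty : forall v : V, exists x, bd x.

Definition dirichlet_op (f : V -> R) (v : V) : R :=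
  if bd v then f v else \sum_(w | e v w) (f v - f w).

Lemma dirichlet_op_sum (I : Type) (r : seq I) (c : I -> R) (f : I -> V -> R) v :
  dirichlet_op (fun w => \sum_(i <- r) c i * f i w) v =
  \sum_(i <- r) c i * dirichlet_op (f i) v.
Proof.
rewrite /dirichlet_op; case: ifP => // _.
under eq_bigr do rewrite -sumrB; rewrite exchange_big /=.
by apply: eq_bigr => i _; rewrite mulr_sumr; apply: eq_bigr => w _; rewrite mulrBr.
Qed.

Lemma dirichlet_energy (f : V -> R) :
  \sum_x \sum_(y | e x y) (f x - f y) ^+ 2 =
  (\sum_x f x * \sum_(y | e x y) (f x - f y)) *+ 2.
Proof.
under eq_bigr do under eq_bigr do rewrite expr2 mulrBr ![_ * f _]mulrC.
rewrite (@sum_edges_by_parts _ _ e_sym _ (fun x y w => f w * (f x - f y))); last first.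
  by move=> x y w; rewrite -mulrN opprB.
by congr (_ *+ 2); apply: eq_bigr => x _; rewrite mulr_sumr.
Qed.

Lemma dirichlet_op_inj (f : V -> R) : (forall v, dirichlet_op f v = 0) -> forall v, f v = 0.
Proof.
move=> f0.
have energy0 : \sum_x \sum_(y | e x y) (f x - f y) ^+ 2 = 0.
  rewrite dirichlet_energy big1 ?mul0rn // => x _.
  by have := f0 x; rewrite /dirichlet_op; case: ifP => _ ->; rewrite ?mul0r ?mulr0.
have edge_eq x y : e x y -> f x = f y.
  move=> exy; apply/eqP; rewrite -subr_eq0 -sqrf_eq0; apply/eqP.
  have sq_ge0 (i : V) : true -> 0 <= \sum_(y | e i y) (f i - f y) ^+ 2.
    by move=> _; apply: sumr_ge0 => ? _; apply: sqr_ge0.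
  have := psumr_eq0P sq_ge0 energy0 (i := x) isT.
  by move/psumr_eq0P; apply=> // ? _; apply: sqr_ge0.
move=> v; have [x0 bd_x0] := boundary_nonempty v.
rewrite (connected_edge_const e_sym connected edge_eq v x0).
by have := f0 x0; rewrite /dirichlet_op bd_x0.
Qed.

Definition dirichlet_mx : 'M[R]_#|V| :=
  \matrix_(i, j) dirichlet_op (fun w => (i == enum_rank w)%:R) (enum_val j).

Lemma mul_dirichlet_mx (u : 'rV[R]_#|V|) v :
  (u *m dirichlet_mx) 0 (enum_rank v) = dirichlet_op (fun w => u 0 (enum_rank w)) v.
Proof.
rewrite mxE; under eq_bigr do rewrite mxE enum_rankK.
rewrite -dirichlet_op_sum; congr dirichlet_op; apply: funext => w.
rewrite (bigD1 (enum_rank w)) //= eqxx mulr1 big1 ?addr0 // => i /negbTE ->.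
by rewrite mulr0.
Qed.

Lemma dirichlet_mx_row_full : row_full dirichlet_mx.
Proof.
rewrite row_full_unit -row_free_unit; apply: inj_row_free => u u0.
have f0 := dirichlet_op_inj (f := fun w => u 0 (enum_rank w)).
apply/rowP => j; rewrite -(enum_valK j) f0 ?mxE // => v.
by rewrite -mul_dirichlet_mx u0 mxE.
Qed.

Lemma dirichlet_op_surj (b : V -> R) : exists f, forall v, dirichlet_op f v = b v.
Proof.
have /row_fullP [B BA] := dirichlet_mx_row_full.
pose u := \row_j b (enum_val j) *m B.
exists (fun w => u 0 (enum_rank w)) => v.
by rewrite -mul_dirichlet_mx -mulmxA BA mulmx1 mxE enum_rankK.
Qed.

Lemma dirichlet_minimum_principle (f : V -> R) :
  (forall v, bd v -> 0 <= f v) ->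
  (forall v, ~~ bd v -> \sum_(w | e v w) (f v - f w) = 0) ->
  forall v, 0 <= f v.
Proof.
move=> f_bd f_harm v.
have [m _ m_min] := @arg_minP _ _ _ v predT f isT.
apply: le_trans (m_min v isT); rewrite leNgt; apply/negP => fm_lt0.
have min_spreads x y : e x y -> x \in [pred z | f z == f m] -> y \in [pred z | f z == f m].
  rewrite !inE => exy /eqP fx.
  have /negbTE bd_x : ~~ bd x by apply: contraTN fm_lt0 => /f_bd; rewrite -fx leNgt.
  have up_ge0 w : e x w -> 0 <= f w - f x by rewrite subr_ge0 fx => _; apply: m_min.
  have up_sum0 : \sum_(w | e x w) (f w - f x) = 0.
    rewrite -[LHS]opprK -sumrN; under eq_bigr do rewrite opprB.
    by rewrite f_harm ?oppr0 ?bd_x.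
  by have /eqP := psumr_eq0P up_ge0 up_sum0 exy; rewrite subr_eq0 fx.
have [x0 bd_x0] := boundary_nonempty v.
have /eqP fx0 := connected_invariant e_sym connected min_spreads (x := m) x0 (eqxx _).
by have := f_bd x0 bd_x0; rewrite fx0 leNgt fm_lt0.
Qed.

Lemma harmonic_measure_exists : exists lam : V -> V -> R,
  [/\ (forall v x, 0 <= lam v x),
      (forall y x, bd y -> lam y x = (y == x)%:R) &
      (forall v x, ~~ bd v -> \sum_(w | e v w) (lam v x - lam w x) = 0)].
Proof.
pose b x v : R := if bd v then (v == x)%:R else 0.
have [lam lamP] := choice (fun x => dirichlet_op_surj (b x)).
have lam_bd y x : bd y -> lam x y = (y == x)%:R.
  by move=> bd_y; have := lamP x y; rewrite /dirichlet_op /b bd_y.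
have lam_harm v x : ~~ bd v -> \sum_(w | e v w) (lam x v - lam x w) = 0.
  by move=> /negbTE bd_v; have := lamP x v; rewrite /dirichlet_op /b bd_v.
exists (fun v x => lam x v); split => // v x.
apply: dirichlet_minimum_principle => // [w bd_w | w]; last exact: lam_harm.
by rewrite lam_bd.
Qed.

End DirichletProblem.

Section DirichletPrinciple.
Variables (R : realFieldType) (U : lmodType R) (S : U -> Prop) (ip : U -> U -> R).
Hypothesis S0 : S 0.
Hypothesis S_comb : forall a u v, S u -> S v -> S (a *: u + v).
Hypothesis ipC : forall u v, S u -> S v -> ip u v = ip v u.
Hypothesis ip_linear : forall a u v w, S u -> S v -> S w ->
  ip (a *: u + v) w = a * ip u w + ip v w.
Hypothesis ip_pos : forall u, S u -> u <> 0 -> 0 < ip u u.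

Lemma S_add u v : S u -> S v -> S (u + v).
Proof. by move=> Su Sv; rewrite -[u]scale1r; apply: S_comb. Qed.

Lemma S_scale a u : S u -> S (a *: u).
Proof. by move=> Su; rewrite -[_ *: _]addr0; apply: S_comb. Qed.

Lemma S_sub u v : S u -> S v -> S (u - v).
Proof. by move=> Su Sv; rewrite -scaleN1r addrC; apply: S_comb. Qed.

Lemma S_sum (I : Type) (r : seq I) (P : pred I) (F : I -> U) :
  (forall i, S (F i)) -> S (\sum_(i <- r | P i) F i).
Proof. by move=> SF; elim/big_ind: _ => // *; apply: S_add. Qed.

Lemma ip0l w : S w -> ip 0 w = 0.
Proof.
move=> Sw; have := ip_linear 1 S0 S0 Sw.
rewrite scaler0 addr0 mul1r => /(congr1 (fun t => t - ip 0 w)).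
by rewrite subrr addrK => <-.
Qed.

Lemma ipDl u v w : S u -> S v -> S w -> ip (u + v) w = ip u w + ip v w.
Proof. by move=> Su Sv Sw; rewrite -[u in LHS]scale1r ip_linear // mul1r. Qed.

Lemma ipZl a u w : S u -> S w -> ip (a *: u) w = a * ip u w.
Proof. by move=> Su Sw; rewrite -[_ *: _]addr0 ip_linear // ip0l // addr0. Qed.

Lemma ipNl u w : S u -> S w -> ip (- u) w = - ip u w.
Proof. by move=> Su Sw; rewrite -scaleN1r ipZl // mulN1r. Qed.

Lemma ipBr u v w : S u -> S v -> S w -> ip w (u - v) = ip w u - ip w v.
Proof.
move=> Su Sv Sw; have SNv : S (- v) by rewrite -scaleN1r; apply: S_scale.
by rewrite (ipC Sw (S_sub Su Sv)) ipDl // ipNl // (ipC Su) // (ipC Sv).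
Qed.

Lemma ip_suml (I : Type) (r : seq I) (P : pred I) (F : I -> U) w :
  (forall i, S (F i)) -> S w ->
  ip (\sum_(i <- r | P i) F i) w = \sum_(i <- r | P i) ip (F i) w.
Proof.
move=> SF Sw; elim: r => [|i r IH]; first by rewrite !big_nil ip0l.
by rewrite !big_cons; case: (P i); rewrite ?ipDl ?IH //; apply: S_sum.
Qed.

Lemma ip_sqrD u v : S u -> S v -> ip (u + v) (u + v) = ip u u + (ip u v) *+ 2 + ip v v.
Proof.
move=> Su Sv; have Suv := S_add Su Sv.
rewrite ipDl // (ipC Su) // (ipC Sv) // !ipDl // (ipC Sv Su).
by rewrite mulr2n !addrA.
Qed.

Lemma ip_ge0 u : S u -> 0 <= ip u u.
Proof.
move=> Su; have [->|u0] := pselect (u = 0); first by rewrite ip0l.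
exact/ltW/ip_pos.
Qed.

Lemma ip_eq0 u : S u -> ip u u = 0 -> u = 0.
Proof. by move=> Su uu0; apply: contrapT => /(ip_pos Su); rewrite uu0 ltxx. Qed.

Variables (V : finType) (e : rel V) (bd : pred V).
Hypothesis e_sym : symmetric e.

Definition energy (g : V -> U) : R :=
  \sum_x \sum_(y | e x y) ip (g x - g y) (g x - g y).

Definition harmonic (h : V -> U) : Prop :=
  forall x, ~~ bd x -> \sum_(y | e x y) (h x - h y) = 0.

Lemma harmonic_comb (lam : V -> V -> R) (b : V -> U) :
  (forall v x, ~~ bd v -> \sum_(w | e v w) (lam v x - lam w x) = 0) ->
  harmonic (fun v => \sum_(x | bd x) lam v x *: b x).
Proof.
move=> lam_harm v bd_v; under eq_bigr do rewrite -sumrB.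
rewrite exchange_big big1 //= => x _.
by under eq_bigr do rewrite -scalerBl; rewrite -scaler_suml lam_harm ?scale0r.
Qed.

Section Energy.
Variables (h d : V -> U).
Hypotheses (Sh : forall v, S (h v)) (Sd : forall v, S (d v)).

Lemma energy_ge0 : 0 <= energy d.
Proof. by do 2!apply: sumr_ge0 => ? _; apply/ip_ge0/S_sub. Qed.

Lemma energy_eq0 : energy d = 0 -> forall x y, e x y -> d x = d y.
Proof.
move=> d0 x y exy; apply/eqP; rewrite -subr_eq0; apply/eqP/ip_eq0; first exact: S_sub.
have ge0 (i : V) : true -> 0 <= \sum_(j | e i j) ip (d i - d j) (d i - d j).
  by move=> _; apply: sumr_ge0 => ? _; apply/ip_ge0/S_sub.
have := psumr_eq0P ge0 d0 (i := x) isT; move/psumr_eq0P; apply=> // j _.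
exact/ip_ge0/S_sub.
Qed.

(* Summing by parts, the cross term is twice
   [\sum_x ip (\sum_(y | e x y) (h x - h y)) (d x)], whose summands vanish
   either by harmonicity of [h] or because [d x = 0]. *)
Lemma energy_cross_eq0 : harmonic h -> (forall x, bd x -> d x = 0) ->
  \sum_x \sum_(y | e x y) ip (h x - h y) (d x - d y) = 0.
Proof.
move=> h_harm d_bd; have Shh x y : S (h x - h y) by apply: S_sub.
under eq_bigr => x _ do under eq_bigr => y _ do rewrite (ipBr (Sd x) (Sd y) (Shh x y)).
rewrite (@sum_edges_by_parts _ _ e_sym _ (fun x y w => ip (h x - h y) (d w))); last first.
  by move=> x y w; rewrite -ipNl // opprB.
rewrite big1 ?mul0rn // => x _; rewrite -ip_suml //.
have [/d_bd ->|/h_harm ->] := boolP (bd x); last by rewrite ip0l.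
have S_lap := S_sum (index_enum V) (e x) (Shh x).
by rewrite (ipC S_lap S0) ip0l.
Qed.

Lemma energyD : harmonic h -> (forall x, bd x -> d x = 0) ->
  energy (fun v => h v + d v) = energy h + energy d.
Proof.
move=> h_harm d_bd; rewrite /energy.
under eq_bigr => x _ do under eq_bigr => y _ do
  rewrite opprD addrACA (ip_sqrD (S_sub (Sh x) (Sh y)) (S_sub (Sd x) (Sd y))).
under eq_bigr do rewrite !big_split /=.
by rewrite !big_split /= energy_cross_eq0 // !addr0.
Qed.

End Energy.

Hypothesis connected : forall x y : V, connect e x y.
Hypothesis boundary_nonempty : forall v : V, exists x, bd x.

Lemma dirichlet_principle (h g : V -> U) :
  (forall v, S (h v)) -> (forall v, S (g v)) -> harmonic h ->
  (forall x, bd x -> g x = h x) ->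
  energy h <= energy g /\ (energy g <= energy h -> g = h).
Proof.
move=> Sh Sg h_harm g_bd; pose d v := g v - h v.
have Sd v : S (d v) by apply: S_sub.
have d_bd x : bd x -> d x = 0 by move=> /g_bd; rewrite /d => ->; rewrite subrr.
have -> : energy g = energy h + energy d.
  by rewrite -energyD //; congr energy; apply: funext => v; rewrite /d addrC subrK.
split => [|]; first by rewrite lerDl energy_ge0.
rewrite gerDl => d_le0; apply: funext => v; apply/eqP; rewrite -subr_eq0; apply/eqP.
have d0 : energy d = 0 by apply/eqP; rewrite eq_le d_le0 energy_ge0.
have [x bd_x] := boundary_nonempty v.
rewrite -/(d v) (connected_edge_const e_sym connected (energy_eq0 Sd d0) v x).
exact: d_bd.
Qed.

End DirichletPrinciple.

Lemma sup_scale (R : realType) (A : set R) (t : R) : 0 <= t -> has_sup A ->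
  sup [set t * a | a in A] = t * sup A.
Proof.
move=> t_ge0 [[a0 Aa0] [M ubM]].
have [<-|t_gt0] := eqVneq 0 t.
  rewrite mul0r (_ : [set _ | a in A] = [set 0]) ?sup1 //.
  apply/seteqP; split; first by move=> _ [a _ <-]; rewrite mul0r.
  by move=> _ ->; exists a0 => //; rewrite mul0r.
have {t_gt0 t_ge0} t_gt0 : 0 < t by rewrite lt_neqAle t_gt0.
have tA_ub : ubound [set t * a | a in A] (t * sup A).
  move=> _ [a Aa <-]; rewrite ler_pM2l //; apply: ub_le_sup => //; by exists M.
apply/eqP; rewrite eq_le ge_sup //=; last by exists (t * a0), a0.
rewrite -ler_pdivlMl //; apply: ge_sup; first by exists a0.
move=> a Aa; rewrite ler_pdivlMl //; apply: ub_le_sup; last by exists a.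
by exists (t * sup A).
Qed.

Section ConvexBodies.
Variables (R : realType) (n : nat).
Local Notation vec := 'rV[R]_n.

Lemma dotpC (a x : vec) : dotp a x = dotp x a.
Proof. by apply: eq_bigr => i _; rewrite mulrC. Qed.

Lemma dotpDl (a b x : vec) : dotp (a + b) x = dotp a x + dotp b x.
Proof. by rewrite /dotp -big_split; apply: eq_bigr => i _; rewrite mxE mulrDl. Qed.

Lemma dotpZl (t : R) (a x : vec) : dotp (t *: a) x = t * dotp a x.
Proof. by rewrite /dotp mulr_sumr; apply: eq_bigr => i _; rewrite mxE mulrA. Qed.

Lemma dotpBl (a b x : vec) : dotp (a - b) x = dotp a x - dotp b x.
Proof. by rewrite dotpDl -scaleN1r dotpZl mulN1r. Qed.

Lemma dotpBr (a x y : vec) : dotp a (x - y) = dotp a x - dotp a y.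
Proof. by rewrite dotpC dotpBl !(dotpC _ a). Qed.

Lemma dotpZr (t : R) (a x : vec) : dotp a (t *: x) = t * dotp a x.
Proof. by rewrite dotpC dotpZl dotpC. Qed.

Lemma dotp0l (x : vec) : dotp 0 x = 0.
Proof. by rewrite -(scale0r 0) dotpZl mul0r. Qed.

Lemma dotp_ge0 (a : vec) : 0 <= dotp a a.
Proof. by apply: sumr_ge0 => i _; rewrite -expr2 sqr_ge0. Qed.

Lemma dotp_gt0 (a : vec) : a != 0 -> 0 < dotp a a.
Proof.
move=> a_neq0; rewrite lt_def dotp_ge0 andbT; apply: contra a_neq0 => /eqP aa0.
have sq_ge0 (i : 'I_n) : true -> 0 <= a 0 i * a 0 i by rewrite -expr2 sqr_ge0.
apply/eqP/rowP => j; have /eqP := psumr_eq0P sq_ge0 aa0 (i := j) isT.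
by rewrite mulf_eq0 orbb mxE => /eqP.
Qed.

Lemma continuous_dotp (T : topologicalType) (f g : T -> vec) :
  continuous f -> continuous g -> continuous (fun t => dotp (f t) (g t)).
Proof.
move=> f_cont g_cont; apply: continuous_big => [|i _].
  exact: add_continuous.
move=> t; apply: continuousM.
- by apply: (@continuous_comp _ _ _ f (fun M : vec => M 0 i)); [exact: f_cont | exact: coord_continuous].
- by apply: (@continuous_comp _ _ _ g (fun M : vec => M 0 i)); [exact: g_cont | exact: coord_continuous].
Qed.

Lemma convex_body_compact (A : set vec) : convex_body A -> compact A.
Proof. by move=> [A_closed [A_bounded _]]; apply: bounded_closed_compact. Qed.

Lemma convex_body_neq0 (A : set vec) : convex_body A -> A !=set0.
Proof. by move=> [_ [_ []]]. Qed.

Lemma convex_bodyP (A : set vec) : convex_body A <->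
  [/\ compact A, A !=set0 &
      forall a b (t : R), A a -> A b -> 0 <= t -> t <= 1 -> A (t *: a + (1 - t) *: b)].
Proof.
split=> [A_body|[A_compact A_neq0 A_convex]].
  split; [exact: convex_body_compact | exact: convex_body_neq0 |].
  move=> a b t Aa Ab t_ge0 t_le1; case: A_body => _ [_ [_ A_convex]].
  by have := A_convex a b (Itv01 t_ge0 t_le1); rewrite !inE; apply.
split; first exact: compact_closed (@norm_hausdorff _ _) A_compact.
split; first exact: compact_bounded.
by split => // a b t; rewrite !inE => Aa Ab; apply: A_convex.
Qed.

Lemma convex_body0 : convex_body [set (0 : vec)].
Proof.
apply/convex_bodyP; split; [exact: compact_set1 | by exists 0 |].
by move=> a b t -> -> _ _; rewrite !scaler0 addr0.
Qed.

Lemma convex_body_add (A B : set vec) :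
  convex_body A -> convex_body B -> convex_body (mink_add A B).
Proof.
move=> /convex_bodyP[A_compact [a Aa] A_convex] /convex_bodyP[B_compact [b Bb] B_convex].
apply/convex_bodyP; split.
- have -> : mink_add A B = (fun z : vec * vec => z.1 + z.2) @` (A `*` B).
    apply/seteqP; split; first by move=> _ [a' Aa' [b' Bb' <-]]; exists (a', b').
    by move=> _ [[a' b'] [/= Aa' Bb'] <-]; exists a' => //; exists b'.
  apply: continuous_compact; first exact: continuous_subspaceT add_continuous.
  exact: compact_setX.
- by exists (a + b), a => //; exists b.
- move=> _ _ t [a1 Aa1 [b1 Bb1 <-]] [a2 Aa2 [b2 Bb2 <-]] t_ge0 t_le1.
  exists (t *: a1 + (1 - t) *: a2); first exact: A_convex.
  exists (t *: b1 + (1 - t) *: b2); first exact: B_convex.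
  by rewrite !scalerDr addrACA.
Qed.

Lemma convex_body_scale (t : R) (A : set vec) :
  convex_body A -> convex_body (mink_scale t A).
Proof.
move=> /convex_bodyP[A_compact [a Aa] A_convex]; apply/convex_bodyP; split.
- apply: continuous_compact A_compact; apply: continuous_subspaceT => a'.
  exact: scaler_continuous.
- by exists (t *: a), a.
- move=> _ _ s [a1 Aa1 <-] [a2 Aa2 <-] s_ge0 s_le1.
  exists (s *: a1 + (1 - s) *: a2); first exact: A_convex.
  by rewrite scalerDr !scalerA mulrC (mulrC t).
Qed.

Lemma support_fun_has_sup (A : set vec) x : convex_body A -> has_sup [set dotp a x | a in A].
Proof.
move=> A_body; have [a Aa] := convex_body_neq0 A_body.
apply: compact_has_sup; first by exists (dotp a x), a.
apply: continuous_compact (convex_body_compact A_body).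
by apply/continuous_subspaceT/continuous_dotp; [move=> ?; exact: cvg_id | exact: cst_continuous].
Qed.

Lemma support_fun0 : support_fun [set (0 : vec)] = 0.
Proof.
apply: funext => x; rewrite /support_fun (_ : [set _ | a in _] = [set 0]) ?sup1 //.
apply/seteqP; split; first by move=> _ [a -> <-]; rewrite dotp0l.
by move=> _ ->; exists 0 => //; rewrite dotp0l.
Qed.

Lemma support_fun_add (A B : set vec) : convex_body A -> convex_body B ->
  support_fun (mink_add A B) = support_fun A + support_fun B.
Proof.
move=> A_body B_body; rewrite addrfctE; apply: funext => x.
rewrite /support_fun -sup_sumE; try exact: support_fun_has_sup.
congr sup; apply/seteqP; split.
  move=> _ [_ [a Aa [b Bb <-]] <-]; exists (dotp a x); first by exists a.
  by exists (dotp b x); [exists b | rewrite dotpDl].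
move=> _ [_ [a Aa <-] [_ [b Bb <-] <-]]; exists (a + b); last by rewrite dotpDl.
by exists a => //; exists b.
Qed.

Lemma support_fun_scale (t : R) (A : set vec) : convex_body A -> 0 <= t ->
  support_fun (mink_scale t A) = t *: support_fun A.
Proof.
move=> A_body t_ge0; rewrite scalrfctE; apply: funext => x.
rewrite [RHS]/GRing.scale /= /support_fun -sup_scale //; last exact: support_fun_has_sup.
congr sup; apply/seteqP; split.
  by move=> _ [_ [a Aa <-] <-]; exists (dotp a x); [exists a | rewrite dotpZl].
by move=> _ [_ [a Aa <-] <-]; exists (t *: a); [exists a | rewrite dotpZl].
Qed.

Lemma mink_comb_convex_body (I : Type) (r : seq I) (P : pred I) (mu : I -> R)
    (C : I -> set vec) : (forall i, P i -> convex_body (C i)) ->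
  convex_body (\big[@mink_add R n/[set 0]]_(i <- r | P i) mink_scale (mu i) (C i)).
Proof.
move=> C_body; elim/big_rec: _ => [|i B Pi B_body]; first exact: convex_body0.
by apply: convex_body_add => //; apply/convex_body_scale/C_body.
Qed.

Lemma support_fun_mink_comb (I : Type) (r : seq I) (P : pred I) (mu : I -> R)
    (C : I -> set vec) :
  (forall i, P i -> 0 <= mu i) -> (forall i, P i -> convex_body (C i)) ->
  support_fun (\big[@mink_add R n/[set 0]]_(i <- r | P i) mink_scale (mu i) (C i)) =
  \sum_(i <- r | P i) mu i *: support_fun (C i).
Proof.
move=> mu_ge0 C_body; elim: r => [|i r IH]; first by rewrite !big_nil support_fun0.
rewrite !big_cons; case: ifP => // Pi.
have Ci_body := C_body i Pi.
rewrite support_fun_add ?support_fun_scale ?IH ?mu_ge0 //.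
  exact: convex_body_scale.
exact: mink_comb_convex_body.
Qed.

Lemma nearest_point_obtuse (A : set vec) (p a0 : vec) : convex_body A -> A a0 ->
  (forall a, A a -> dotp (p - a0) (p - a0) <= dotp (p - a) (p - a)) ->
  forall a, A a -> dotp (a - a0) (p - a0) <= 0.
Proof.
move=> /convex_bodyP[_ _ A_convex] Aa0 a0_min a Aa.
set q := p - a0 in a0_min *; set d := a - a0; set c := dotp d q; set D := dotp d d.
rewrite leNgt; apply/negP => c_gt0.
have D_ge0 : 0 <= D by apply: dotp_ge0.
(* The point of [a0, a] at parameter [s] is strictly closer to [p] than [a0]. *)
set s := c / (c + D).
have cD_gt0 : 0 < c + D by apply: ltr_wpDr.
have s_gt0 : 0 < s by apply: divr_gt0.
have s_le1 : s <= 1 by rewrite ler_pdivrMr // mul1r lerDl.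
have sE : s * (c + D) = c by rewrite /s mulfVK // gt_eqF.
have := a0_min _ (A_convex a a0 s Aa Aa0 (ltW s_gt0) s_le1).
have -> : p - (s *: a + (1 - s) *: a0) = q - s *: d.
  by rewrite /q /d scalerBl scale1r scalerBr !opprD !opprK !addrA (addrAC p).
clearbody q d; rewrite !(dotpBl, dotpBr, dotpZl, dotpZr) (dotpC q d) -/c -/D.
by move=> ?; nra.
Qed.

Lemma support_fun_le_subset (A B : set vec) : convex_body A -> convex_body B ->
  (forall x, support_fun B x <= support_fun A x) -> B `<=` A.
Proof.
move=> A_body B_body hB_le_hA p Bp; apply: contrapT => nAp.
have p_sub_cont : continuous (fun a : vec => p - a).
  by move=> a; apply: continuousB; [exact: cst_continuous | exact: cvg_id].
have [a0 a0A a0_min] := @EVT_min_rV R n (fun a => dotp (p - a) (p - a)) A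
  (convex_body_neq0 A_body) (convex_body_compact A_body)
  (continuous_subspaceT (continuous_dotp p_sub_cont p_sub_cont)).
move: a0A; rewrite inE => Aa0; set q := p - a0.
have q_neq0 : q != 0 by apply: contra_notN nAp; rewrite subr_eq0 => /eqP ->.
have hA_le : support_fun A q <= dotp a0 q.
  apply: ge_sup; first by have [a Aa] := convex_body_neq0 A_body; exists (dotp a q), a.
  move=> _ [a Aa <-]; rewrite -subr_le0 -dotpBl.
  by apply: (nearest_point_obtuse A_body Aa0) => // a' Aa'; apply: a0_min; rewrite inE.
have hB_ge : dotp p q <= support_fun B q.
  by apply: ub_le_sup; [case: (support_fun_has_sup q B_body) | exists p].
have := le_trans (hB_le_hA q) hA_le; apply/negP; rewrite -ltNge.
by apply: lt_le_trans hB_ge; rewrite -subr_gt0 -dotpBl dotp_gt0.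
Qed.

Lemma support_fun_inj (A B : set vec) : convex_body A -> convex_body B ->
  support_fun A = support_fun B -> A = B.
Proof.
move=> A_body B_body hAB; apply/seteqP; split;
  by apply: support_fun_le_subset => // x; rewrite hAB.
Qed.

End ConvexBodies.

Section SupportFunctionSpan.
Variables (R : realType) (n : nat).
Local Notation vec := 'rV[R]_n.

Lemma in_spanH0 : in_spanH (0 : vec -> R).
Proof.
exists 0%N, (fun _ => 0), (fun _ => set0); split => [[]//|].
by apply: funext => x; rewrite big_ord0.
Qed.

Lemma in_spanH_comb (a : R) (f g : vec -> R) :
  in_spanH f -> in_spanH g -> in_spanH (a *: f + g).
Proof.
move=> [k1 [c1 [A1 [A1_body ->]]]] [k2 [c2 [A2 [A2_body ->]]]].
exists (k1 + k2)%N,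
  (fun i => match fintype.split i with inl j => a * c1 j | inr j => c2 j end),
  (fun i => match fintype.split i with inl j => A1 j | inr j => A2 j end); split.
  by move=> i; case: (fintype.split i).
rewrite addrfctE scalrfctE; apply: funext => x /=.
rewrite [a *: _]/GRing.scale /= big_split_ord /= mulr_sumr.
congr (_ + _); apply: eq_bigr => j _.
  by rewrite (unsplitK (inl _ j)) mulrA.
by rewrite (unsplitK (inr _ j)).
Qed.

Lemma in_spanH_support (A : set vec) : convex_body A -> in_spanH (support_fun A).
Proof.
move=> A_body; exists 1%N, (fun _ => 1), (fun _ => A); split => //.
by apply: funext => x; rewrite big_ord1 mul1r.
Qed.

Lemma ext_length_energy (V : finType) (e : rel V) (ip : (vec -> R) -> (vec -> R) -> R)
    (C : V -> set vec) :
  inner_product_on_spanH ip -> (forall v, convex_body (C v)) ->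
  ext_length e ip C = 2^-1 * energy ip e (fun v => support_fun (C v)).
Proof.
move=> [_ [ip_linear ip_pos]] C_body; congr (_ * _).
apply: eq_bigr => x _; apply: eq_bigr => y _; rewrite sqr_sqrtr //.
apply: (ip_ge0 in_spanH0 ip_linear ip_pos).
exact: (S_sub (@in_spanH_comb) (in_spanH_support (C_body x)) (in_spanH_support (C_body y))).
Qed.

End SupportFunctionSpan.

Section MinimalExtension.
Variables (V : finType) (e : rel V) (R : realType) (n : nat).
Variables (ip : ('rV[R]_n -> R) -> ('rV[R]_n -> R) -> R) (chi : V -> set 'rV[R]_n).
Variable lam : V -> V -> R.
Hypotheses (tree : is_tree e) (deg13 : degrees_1_or_3 e).
Hypothesis ip_spanH : inner_product_on_spanH ip.
Hypothesis chi_body : forall x, is_leaf e x -> convex_body (chi x).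
Hypothesis lam_ge0 : forall v x, 0 <= lam v x.
Hypothesis lam_leaf : forall y x, is_leaf e y -> lam y x = (y == x)%:R.
Hypothesis lam_harm : forall v x, ~~ is_leaf e v ->
  \sum_(w | e v w) (lam v x - lam w x) = 0.

Definition mink_extension (v : V) : set 'rV[R]_n :=
  \big[@mink_add R n/[set 0]]_(x | is_leaf e x) mink_scale (lam v x) (chi x).

Lemma support_fun_mink_extension v :
  support_fun (mink_extension v) = \sum_(x | is_leaf e x) lam v x *: support_fun (chi x).
Proof. exact: support_fun_mink_comb. Qed.

Lemma mink_extension_is_extension : is_extension e chi mink_extension.
Proof.
split=> [v|y leaf_y]; first exact: mink_comb_convex_body.
apply: support_fun_inj; [exact: mink_comb_convex_body | exact: chi_body |].
rewrite support_fun_mink_extension (bigD1 y) //= lam_leaf // eqxx scale1r.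
rewrite big1 ?addr0 // => x /andP[_ /negbTE xy].
by rewrite lam_leaf // eq_sym xy scale0r.
Qed.

Lemma mink_extension_minimal C : is_extension e chi C ->
  ext_length e ip mink_extension <= ext_length e ip C /\
  (ext_length e ip C <= ext_length e ip mink_extension -> C = mink_extension).
Proof.
have [ipC [ip_linear ip_pos]] := ip_spanH.
have [ext_body ext_leaf] := mink_extension_is_extension.
move=> [C_body C_leaf]; rewrite !ext_length_energy //.
have [] := dirichlet_principle (S := @in_spanH R n) (@in_spanH0 R n) (@in_spanH_comb R n) ipC ip_linear ip_pos
  (tree_sym tree) (tree_connected tree) (exists_leaf tree deg13)
  (h := fun v => support_fun (mink_extension v)) (g := fun v => support_fun (C v)).
- by move=> v; apply: in_spanH_support.
- by move=> v; apply: in_spanH_support.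
- have -> : (fun v => support_fun (mink_extension v)) =
            (fun v => \sum_(x | is_leaf e x) lam v x *: support_fun (chi x)).
    by apply: funext => v; apply: support_fun_mink_extension.
  exact: harmonic_comb.
- by move=> x leaf_x; rewrite C_leaf // ext_leaf.
move=> le_energy eq_energy; split; first by rewrite ler_wpM2l // invr_ge0 ler0n.
rewrite ler_pM2l ?invr_gt0 ?ltr0n // => /eq_energy hC_eq.
apply: funext => v; apply: support_fun_inj => //.
exact: (congr1 (fun h => h v) hC_eq).
Qed.

End MinimalExtension.

Theorem theorem2 (V : finType) (e : rel V) (R : realType) :
  is_tree e -> degrees_1_or_3 e ->
  exists lambda : V -> V -> R,
    (forall v x, is_leaf e x -> 0 <= lambda v x) /\
    (forall x, is_leaf e x -> lambda x x = 1) /\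
    forall (n : nat) (ip : ('rV[R]_n -> R) -> ('rV[R]_n -> R) -> R)
           (chi : V -> set 'rV[R]_n),
      inner_product_on_spanH ip ->
      (forall x, is_leaf e x -> convex_body (chi x)) ->
      exists chihat0 : V -> set 'rV[R]_n,
        [/\ is_extension e chi chihat0,
            (forall chihat, is_extension e chi chihat ->
               ext_length e ip chihat0 <= ext_length e ip chihat),
            (forall chihat, is_extension e chi chihat ->
               ext_length e ip chihat <= ext_length e ip chihat0 ->
               chihat = chihat0) &
            (forall v, chihat0 v =
               \big[@mink_add R n/[set 0]]_(x | is_leaf e x)
                  mink_scale (lambda v x) (chi x))].
Proof.
move=> tree deg13.
have [lam [lam_ge0 lam_leaf lam_harm]] := harmonic_measure_exists R
  (tree_sym tree) (tree_connected tree) (exists_leaf tree deg13).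
exists lam; split=> [v x _|]; first exact: lam_ge0.
split=> [x leaf_x|n ip chi ip_spanH chi_body]; first by rewrite lam_leaf ?eqxx.
have minimal C := mink_extension_minimal tree deg13 ip_spanH chi_body lam_ge0 lam_leaf
  lam_harm (C := C).
exists (mink_extension e chi lam); split=> //.
- exact: mink_extension_is_extension.
- by move=> C /minimal[].
- by move=> C /minimal[].
Qed.
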